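(* Let $p\in(0,1)$, $x\geq1$, and let $(\xi_n)_{n\geq1}$ be i.i.d. with $\mathbf{P}(\xi_1=1)=p=1-\mathbf{P}(\xi_1=-1)$. Set $W_0:=x$, $B_1:=1$, $W_n:=W_{n-1}+\xi_nB_n$, $B_{n+1}:=B_n2^{\xi_n}$ for $n\geq1$, and $Y_n:=W_n/B_{n+1}$ for $n\in\mathbb{N}$. Then almost surely on the event $\{Y_k\leq2\text{ for some }k\in\mathbb{N}\}$, there exists $n$ with $W_n\leq0$ (the gambler eventually goes bankrupt). *)

From HB Require Import structures.
From mathcomp Require Import all_boot all_order all_algebra.
From mathcomp Require Import all_classical all_reals all_analysis.
Set Implicit Arguments. Unset Strict Implicit. Unset Printing Implicit Defensive.
Import Order.TTheory GRing.Theory Num.Theory.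
Local Open Scope classical_set_scope.
Local Open Scope ring_scope.

Definition mutually_independent_RV {d} {T : measurableType d} {R : realType}
  (P : probability T R) (I : set nat) (X : nat -> {RV P >-> R}) : Prop :=
  forall (J : seq nat) (A : nat -> set R),
    uniq J -> {subset J <= I} ->
    (forall j, j \in J -> measurable (A j)) ->
    P (\bigcap_(j in [set j | j \in J]) (X j @^-1` A j)) =
    (\prod_(j <- J) P (X j @^-1` A j))%E.

(* Paper indexing: xi n for n >= 1 (xi 0 unused).
   Bs e n = B_{n+1}:  B_1 = 1,  B_{n+1} = B_n * 2^{xi_n}.            *)
Fixpoint Bs {R : realType} (e : nat -> R) (n : nat) : R :=
  match n with
  | 0 => 1
  | m.+1 => Bs e m * powR 2 (e m.+1)
  end.

Fixpoint Ws {R : realType} (x : R) (e : nat -> R) (n : nat) : R :=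
  match n with
  | 0 => x
  | m.+1 => Ws x e m + e m.+1 * Bs e m
  end.

Definition Ys {R : realType} (x : R) (e : nat -> R) (n : nat) : R :=
  Ws x e n / Bs e n.

Arguments mutually_independent_RV {d T R} P I X.

From HB Require Import structures.
From mathcomp Require Import all_boot all_order all_algebra.
From mathcomp Require Import all_classical all_reals all_analysis.
From mathcomp Require Import ring lra zify.
Import Order.TTheory GRing.Theory Num.Theory.
Set Implicit Arguments.
Unset Strict Implicit.
Unset Printing Implicit Defensive.
Local Open Scope classical_set_scope.
Local Open Scope ring_scope.

(* The normalised wealth Y_n = W_n / B_{n+1} has the sign of W_n and moves by
   Y |-> (Y + 1) / 2 after a win and Y |-> 2 (Y - 1) after a loss.  Hence
   {Y <= 2} is absorbing, and from Y <= 2 the three outcomes win, loss, loss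
   give Y <= 3/2, then Y <= 1, then Y <= 0: ruin.  On the disjoint blocks of
   rounds {m, m+1, m+2}, {m+3, m+4, m+5}, ... this pattern occurs independently
   with probability q = p (1 - p)^2 > 0, so it is missed in N blocks with
   probability (1 - q)^N, which tends to 0. *)

Section betting_dynamics.
Variable R : realType.
Implicit Types (x : R) (e : nat -> R).

Lemma Bs_gt0 e n : 0 < Bs e n.
Proof. by elim: n => [|n IH] //=; rewrite mulr_gt0 ?powR_gt0. Qed.

Lemma Ys_win x e n : e n.+1 = 1 -> Ys x e n.+1 = (Ys x e n + 1) / 2.
Proof.
move=> en; rewrite /Ys /= en powRr1 // mul1r.
by field; rewrite gt_eqF ?Bs_gt0.
Qed.

Lemma Ys_loss x e n : e n.+1 = -1 -> Ys x e n.+1 = (Ys x e n - 1) * 2.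
Proof.
move=> en; rewrite /Ys /= en powRN powRr1 //.
by field; rewrite gt_eqF ?Bs_gt0.
Qed.

Lemma Ys_le0 x e n : (Ys x e n <= 0) = (Ws x e n <= 0).
Proof. by rewrite /Ys pmulr_lle0 // invr_gt0 Bs_gt0. Qed.

Lemma Ys_le2_stable x e k n : (forall m, e m.+1 = 1 \/ e m.+1 = -1) ->
  Ys x e k <= 2 -> (k <= n)%N -> Ys x e n <= 2.
Proof.
move=> e_pm1 Yk2 /subnK <-; elim: (n - k)%N => // i IH.
rewrite addSn; case: (e_pm1 (i + k)%N) => ei.
  by rewrite Ys_win //; lra.
by rewrite Ys_loss //; lra.
Qed.

Lemma Ws_le0_after_win_loss_loss x e k m :
  (forall n, e n.+1 = 1 \/ e n.+1 = -1) -> Ys x e k <= 2 -> (k <= m)%N ->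
  e m.+1 = 1 -> e m.+2 = -1 -> e m.+3 = -1 -> Ws x e m.+3 <= 0.
Proof.
move=> e_pm1 Yk2 km e1 e2 e3; have Ym2 := Ys_le2_stable e_pm1 Yk2 km.
by rewrite -Ys_le0 Ys_loss // Ys_loss // Ys_win //; lra.
Qed.

End betting_dynamics.

Section independent_cylinders.
Context d (T : measurableType d) (R : realType) (P : probability T R).
Variables (I : set nat) (xi : nat -> {RV P >-> R}).
Hypothesis xi_indep : mutually_independent_RV P I xi.

Definition cylinder (J : seq nat) (A : nat -> set R) : set T :=
  \bigcap_(j in [set j | j \in J]) (xi j @^-1` A j).

Lemma cylinder_nil A : cylinder [::] A = setT.
Proof. by apply/seteqP; split => // w _ j. Qed.

Lemma measurable_cylinder J A :
  {in J, forall j, measurable (A j)} -> measurable (cylinder J A).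
Proof.
by move=> mA; apply: bigcap_measurableType => j /mA; exact: measurable_funPTI.
Qed.

Lemma cylinderI J K A B : {in K, forall j, j \notin J} ->
  cylinder J A `&` cylinder K B =
  cylinder (J ++ K) (fun j => if j \in K then B j else A j).
Proof.
move=> KJ; have JK j : j \in J -> j \notin K by apply: contraTN => /KJ.
apply/seteqP; split => w.
- move=> [wJ wK] j /=; rewrite mem_cat => /orP[jJ|jK].
  + by rewrite ifN ?JK //; exact: wJ.
  + by rewrite jK; exact: wK.
- move=> wJK; split => j /= jX; have := wJK j; rewrite /= mem_cat jX ?orbT //.
  + by rewrite ifN ?JK //; apply.
  + by apply.
Qed.

Lemma probability_cylinderI J K A B : uniq (J ++ K) -> {subset J ++ K <= I} ->
  {in J, forall j, measurable (A j)} -> {in K, forall j, measurable (B j)} ->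
  P (cylinder J A `&` cylinder K B) = (P (cylinder J A) * P (cylinder K B))%E.
Proof.
move=> uJK JK_I mA mB; move: (uJK); rewrite cat_uniq => /and3P[uJ /hasPn KJ uK].
have JK j : j \in J -> j \notin K by apply: contraTN => /KJ.
have J_I : {subset J <= I} by move=> j jJ; apply: JK_I; rewrite mem_cat jJ.
have K_I : {subset K <= I} by move=> j jK; apply: JK_I; rewrite mem_cat jK orbT.
rewrite cylinderI // xi_indep //; last first.
  move=> j; rewrite mem_cat => /orP[jJ|jK]; last by rewrite jK; exact: mB.
  by rewrite ifN ?JK //; exact: mA.
rewrite big_cat /= !xi_indep //; congr (_ * _)%E; apply: eq_big_seq => j jX.
  by rewrite ifN ?JK.
by rewrite jX.
Qed.

End independent_cylinders.

Section win_loss_loss.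
Context d (T : measurableType d) (R : realType) (P : probability T R).
Variables (p : R) (xi : nat -> {RV P >-> R}).
Hypothesis xi_indep : mutually_independent_RV P [set n | (0 < n)%N] xi.
Hypothesis Pwin : forall n, (0 < n)%N -> P (xi n @^-1` [set 1]) = p%:E.
Hypothesis Ploss : forall n, (0 < n)%N -> P (xi n @^-1` [set -1]) = (1 - p)%:E.

Let q := p * (1 - p) ^+ 2.

Definition win_loss_loss m : set T :=
  cylinder xi [:: m; m.+1; m.+2] (fun j => [set if j == m then 1 else -1]).

Fixpoint wll_free m N : set T :=
  if N is N'.+1 then ~` win_loss_loss m `&` wll_free m.+3 N' else setT.

Lemma measurable_wll m : measurable (win_loss_loss m).
Proof. by apply: measurable_cylinder => j _; exact: measurable_set1. Qed.

Lemma measurable_wll_free m N : measurable (wll_free m N).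
Proof.
elim: N m => [|N IH] m //=.
by apply: measurableI; [apply: measurableC; exact: measurable_wll | exact: IH].
Qed.

Lemma xi_win_loss_loss m w : win_loss_loss m w ->
  [/\ xi m w = 1, xi m.+1 w = -1 & xi m.+2 w = -1].
Proof.
move=> wll; have xi_wll j : j \in [:: m; m.+1; m.+2] ->
    xi j w = if j == m then 1 else -1 by exact: wll j.
by split; [move: (xi_wll m) | move: (xi_wll m.+1) | move: (xi_wll m.+2)];
  rewrite ?eqxx ?gtn_eqF // !inE eqxx ?orbT => /(_ isT).
Qed.

Lemma not_wll_free m N w : ~ wll_free m N w ->
  exists2 i, (m <= i)%N & [/\ xi i w = 1, xi i.+1 w = -1 & xi i.+2 w = -1].
Proof.
elim: N m => [|N IH] m /=; first by move=> /(_ I).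
case/not_andP => [/contrapT/xi_win_loss_loss|/IH[i mi wll]]; first by exists m.
by exists i => //; apply: leq_trans mi; rewrite leqW ?leqW.
Qed.

Lemma probability_wll m : (0 < m)%N -> P (win_loss_loss m) = q%:E.
Proof.
move=> m0; rewrite /win_loss_loss xi_indep //; last 2 first.
- by rewrite /= !in_cons !in_nil; lia.
- by move=> j; rewrite !inE => /or3P[]/eqP->; rewrite /=; lia.
rewrite !big_cons big_nil eqxx !gtn_eqF // Pwin // !Ploss // mule1 -!EFinM.
by rewrite /q expr2 mulrA.
Qed.

Definition cylinder_before m (C : set T) := exists J A,
  [/\ C = cylinder xi J A, uniq J, {in J, forall j, 0 < j < m}%N
    & {in J, forall j, measurable (A j)}].

Lemma cylinder_before_setT m : cylinder_before m setT.
Proof. by exists [::], (fun=> setT); rewrite cylinder_nil. Qed.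

Lemma measurable_cylinder_before m C : cylinder_before m C -> measurable C.
Proof. by move=> [J [A [-> _ _ mA]]]; exact: measurable_cylinder. Qed.

Lemma cylinder_beforeW m n C :
  (m <= n)%N -> cylinder_before m C -> cylinder_before n C.
Proof.
move=> mn [J [A [-> uJ J_early mA]]]; exists J, A; split=> // j.
by move=> /J_early/andP[-> jm]; exact: leq_trans jm mn.
Qed.

Lemma uniq_cat_block m J : uniq J -> {in J, forall j, j < m}%N ->
  uniq (J ++ [:: m; m.+1; m.+2]).
Proof.
move=> uJ J_lt; rewrite cat_uniq uJ andTb; apply/andP; split.
  apply/hasPn => j; rewrite !inE => /or3P[]/eqP->;
  by apply/negP => /J_lt; lia.
by rewrite /= !in_cons !in_nil; lia.
Qed.

Lemma cylinder_beforeI_wll m C : (0 < m)%N -> cylinder_before m C ->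
  cylinder_before m.+3 (C `&` win_loss_loss m).
Proof.
move=> m0 [J [A [-> uJ J_early mA]]].
have J_lt : {in J, forall j, j < m}%N by move=> j /J_early/andP[].
have /hasPn KJ : ~~ has (mem J) [:: m; m.+1; m.+2].
  by move: (uniq_cat_block uJ J_lt); rewrite cat_uniq => /and3P[].
eexists; eexists; split; first exact: cylinderI.
- exact: uniq_cat_block.
- move=> j; rewrite mem_cat => /orP[/J_early/andP[-> jm]|].
    by rewrite /=; lia.
  by rewrite !inE => /or3P[]/eqP->; rewrite /=; lia.
- move=> j; case: ifP => [_ _|jK]; first exact: measurable_set1.
  by rewrite mem_cat jK orbF => /mA.
Qed.

Lemma probability_cylinder_beforeI_wll m C : (0 < m)%N -> cylinder_before m C ->
  P (C `&` win_loss_loss m) = (P C * q%:E)%E.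
Proof.
move=> m0 [J [A [-> uJ J_early mA]]].
rewrite (probability_cylinderI xi_indep) ?probability_wll ?uniq_cat_block //.
- by move=> j /J_early/andP[].
- move=> j jJK; apply/mem_set; move: jJK.
  rewrite mem_cat => /orP[/J_early/andP[] //|].
  by rewrite !inE => /or3P[]/eqP->; rewrite /=; lia.
Qed.

(* Generalised over C so that the induction can absorb the first block in C. *)
Lemma probability_cylinder_wll_free N m C : (0 < m)%N -> cylinder_before m C ->
  P (C `&` wll_free m N) = (P C * ((1 - q) ^+ N)%:E)%E.
Proof.
elim: N m C => [|N IH] m C m0 Cm /=; first by rewrite setIT mule1.
have mC := measurable_cylinder_before Cm.
have Cm3 : cylinder_before m.+3 C by apply: cylinder_beforeW Cm; lia.
have CGm3 := cylinder_beforeI_wll m0 Cm.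
have mCF : measurable (C `&` wll_free m.+3 N).
  by apply: measurableI mC _; exact: measurable_wll_free.
have PD : P ((C `&` wll_free m.+3 N) `\` win_loss_loss m) =
    (P (C `&` wll_free m.+3 N) -
     P (C `&` win_loss_loss m `&` wll_free m.+3 N))%E.
  rewrite (setIAC _ (win_loss_loss m)); apply: measureD => //.
    exact: measurable_wll.
  exact: le_lt_trans (probability_le1 _ mCF) (ltry _).
rewrite setIA setIAC -setDE PD !IH //.
rewrite probability_cylinder_beforeI_wll // -(fineK (fin_num_measure _ _ mC)).
by rewrite -!EFinM -EFinB exprS; congr EFin; ring.
Qed.

Lemma probability_wll_forever m : 0 < p < 1 -> (0 < m)%N ->
  P (\bigcap_N wll_free m N) = 0%E.
Proof.
move=> /andP[p0 p1] m0; set S := \bigcap_N wll_free m N.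
have mS : measurable S.
  by apply: bigcapT_measurable => N; exact: measurable_wll_free.
have q0 : 0 < q by rewrite mulr_gt0 ?exprn_gt0 ?subr_gt0.
have q1 : q < 1.
  have r1 : (1 - p) ^+ 2 <= 1 by rewrite exprn_ile1 //; lra.
  by apply: le_lt_trans p1; rewrite ler_piMr // ltW.
have PS_le N : (P S <= ((1 - q) ^+ N)%:E)%E.
  have <- : P (wll_free m N) = ((1 - q) ^+ N)%:E.
    rewrite -[wll_free m N]setTI probability_cylinder_wll_free //.
      by rewrite probability_setT mul1e.
    exact: cylinder_before_setT.
  apply: le_measure; rewrite ?inE //; last exact: bigcap_inf.
  exact: measurable_wll_free.
apply/eqP; rewrite eq_le measure_ge0 andbT.
rewrite -(fineK (fin_num_measure _ _ mS)) lee_fin.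
apply: (cvgr_to_ge (@cvg_expr _ (1 - q) _)); first by rewrite ger0_norm; lra.
by apply: nearW => N; rewrite -lee_fin fineK ?fin_num_measure.
Qed.

Lemma negligible_not_pm1 :
  P.-negligible (\bigcup_n xi n.+1 @^-1` ~` [set 1; -1]).
Proof.
apply: negligible_bigcup => n.
have mpm1 : measurable (xi n.+1 @^-1` [set 1; -1]).
  by apply: measurable_funPTI; apply: measurableU; exact: measurable_set1.
apply/negligibleP; first by rewrite -preimage_setC; exact: measurableC.
suff : P (xi n.+1 @^-1` ~` [set 1; -1]) = 0%E by [].
have PU : P (xi n.+1 @^-1` [set 1; -1]) =
    (P (xi n.+1 @^-1` [set 1%R]) + P (xi n.+1 @^-1` [set (-1)%R]))%E.
  rewrite preimage_setU measureU //.
  by apply/seteqP; split => w //= [->]; lra.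
rewrite -preimage_setC probability_setC // PU Pwin // Ploss //.
by rewrite -EFinD addrC subrK subrr.
Qed.

End win_loss_loss.

Theorem lemma2p1 (d : measure_display) (T : measurableType d) (R : realType)
  (P : probability T R) (p x : R) (xi : nat -> {RV P >-> R}) :
  0 < p < 1 -> 1 <= x ->
  mutually_independent_RV P [set n | (1 <= n)%N] xi ->
  (forall n, (1 <= n)%N -> P (xi n @^-1` [set 1]) = p%:E) ->
  (forall n, (1 <= n)%N -> P (xi n @^-1` [set -1]) = (1 - p)%:E) ->
  \forall w \ae P,
    (exists k : nat, Ys x (fun n => xi n w) k <= 2) ->
    exists n : nat, Ws x (fun n => xi n w) n <= 0.
Proof.
move=> p01 _ xi_indep Pwin Ploss.
have wll_forever_null k : P.-negligible (\bigcap_N wll_free xi k.+1 N).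
  apply/negligibleP.
    by apply: bigcapT_measurable => N; exact: measurable_wll_free.
  exact: (probability_wll_forever xi_indep Pwin Ploss p01 (ltn0Sn k)).
apply: negligibleS (negligibleU (negligible_not_pm1 Pwin Ploss)
                                (negligible_bigcup wll_forever_null)).
move=> w; apply: contra_notP => /not_orP[not_bad wll_free_never] [k Yk2].
have xi_pm1 n : xi n.+1 w = 1 \/ xi n.+1 w = -1.
  by apply: contrapT => ?; apply: not_bad; exists n.
have [N not_free] : exists N, ~ wll_free xi k.+1 N w.
  apply: contrapT => free; apply: wll_free_never; exists k => // N _.
  by apply: contrapT => ?; apply: free; exists N.
have [[|i] ki [x1 x2 x3]] := not_wll_free not_free; first by [].
by exists i.+3; exact: Ws_le0_after_win_loss_loss xi_pm1 Yk2 ki x1 x2 x3.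
Qed.
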